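(* Let $S:\mathbb{R}^m\times\mathbb{R}^n\to\mathbb{R}^q$ be a bilinear map with lifted linear operator $\mathscr{S}$, let $\mathcal{K}\subseteq\mathbb{R}^m\times\mathbb{R}^n$, let $\mathcal{K}'=\{xy^T:(x,y)\in\mathcal{K}\}$ and $\mathcal{M}=\mathcal{K}'-\mathcal{K}'=\{X_1-X_2:X_1,X_2\in\mathcal{K}'\}$. Then for every $(x,y)\in\mathcal{K}$, with $z=S(x,y)$, the problem ''minimize $\operatorname{rank}(W)$ subject to $\mathscr{S}(W)=z$, $W\in\mathcal{K}'$'' has a unique optimal solution (equal to $xy^T$), if and only if $\mathcal{N}(\mathscr{S},2)\cap\mathcal{M}=\{0\}$.
   Context: A map is bilinear if linear in each argument separately. For $j=1,\dots,q$ let $S_j\in\mathbb{R}^{m\times n}$ be the unique matrix with $(S(x,y))_j=x^TS_jy$; the lifted operator $\mathscr{S}:\mathbb{R}^{m\times n}\to\mathbb{R}^q$ is $(\mathscr{S}(W))_j=\operatorname{tr}(S_j^TW)$, so $\mathscr{S}(xy^T)=S(x,y)$. $\mathcal{N}(\mathscr{S},k)=\{X\in\mathbb{R}^{m\times n}:\operatorname{rank}(X)\le k,\ \mathscr{S}(X)=0\}$. The paper phrases the conclusion as ''the solution to the rank minimization problem will be correct for every observation $z=S(x,y)$''. *)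

From HB Require Import structures.
From mathcomp Require Import all_boot all_order all_algebra.
From mathcomp Require Import reals.
Set Implicit Arguments. Unset Strict Implicit. Unset Printing Implicit Defensive.
Import Order.TTheory GRing.Theory Num.Theory.
Local Open Scope ring_scope.

Definition bilinear_map (R : realType) (m n q : nat)
    (S : 'cV[R]_m -> 'cV[R]_n -> 'cV[R]_q) : Prop :=
  (forall (y : 'cV[R]_n) (a : R) (x1 x2 : 'cV[R]_m),
      S (a *: x1 + x2) y = a *: S x1 y + S x2 y) /\
  (forall (x : 'cV[R]_m) (a : R) (y1 y2 : 'cV[R]_n),
      S x (a *: y1 + y2) = a *: S x y1 + S x y2).

(* S_j : the matrix with (S(x,y))_j = x^T S_j y, i.e. (S_j)_{ab} = S(e_a,e_b)_j. *)
Definition Smat (R : realType) (m n q : nat)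
    (S : 'cV[R]_m -> 'cV[R]_n -> 'cV[R]_q) (j : 'I_q) : 'M[R]_(m, n) :=
  \matrix_(a < m, b < n) S (delta_mx a 0) (delta_mx b 0) j 0.

Definition liftS (R : realType) (m n q : nat)
    (S : 'cV[R]_m -> 'cV[R]_n -> 'cV[R]_q) (W : 'M[R]_(m, n)) : 'cV[R]_q :=
  \col_(j < q) \tr ((Smat S j)^T *m W).

Definition nullset (R : realType) (m n q : nat)
    (S : 'cV[R]_m -> 'cV[R]_n -> 'cV[R]_q) (k : nat) (X : 'M[R]_(m, n)) : Prop :=
  (\rank X <= k)%N /\ liftS S X = 0.

Definition Kprime (R : realType) (m n : nat)
    (K : 'cV[R]_m * 'cV[R]_n -> Prop) (W : 'M[R]_(m, n)) : Prop :=
  exists (x : 'cV[R]_m) (y : 'cV[R]_n), K (x, y) /\ W = x *m y^T.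

Definition Kdiff (R : realType) (m n : nat)
    (K : 'cV[R]_m * 'cV[R]_n -> Prop) (X : 'M[R]_(m, n)) : Prop :=
  exists X1 X2, Kprime K X1 /\ Kprime K X2 /\ X = X1 - X2.

Definition feasible (R : realType) (m n q : nat)
    (S : 'cV[R]_m -> 'cV[R]_n -> 'cV[R]_q) (K : 'cV[R]_m * 'cV[R]_n -> Prop)
    (z : 'cV[R]_q) (W : 'M[R]_(m, n)) : Prop :=
  liftS S W = z /\ Kprime K W.

Definition optimal (R : realType) (m n q : nat)
    (S : 'cV[R]_m -> 'cV[R]_n -> 'cV[R]_q) (K : 'cV[R]_m * 'cV[R]_n -> Prop)
    (z : 'cV[R]_q) (W : 'M[R]_(m, n)) : Prop :=
  feasible S K z W /\
  forall W', feasible S K z W' -> (\rank W <= \rank W')%N.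

Definition unique_optimal_eq (R : realType) (m n q : nat)
    (S : 'cV[R]_m -> 'cV[R]_n -> 'cV[R]_q) (K : 'cV[R]_m * 'cV[R]_n -> Prop)
    (z : 'cV[R]_q) (W0 : 'M[R]_(m, n)) : Prop :=
  optimal S K z W0 /\ forall W, optimal S K z W -> W = W0.

From HB Require Import structures.
From mathcomp Require Import all_boot all_order all_algebra.
From mathcomp Require Import reals.
Set Implicit Arguments. Unset Strict Implicit. Unset Printing Implicit Defensive.
Import Order.TTheory GRing.Theory Num.Theory.
Local Open Scope ring_scope.

(* Since S(x,y) = S(xy^T) for the linear lift, two points of K with the
   same observation differ by an element of K' - K' in the kernel of the
   lift, of rank at most 2; conversely every feasible W is in K', so W - xy^T
   is such an element.  Hence uniqueness of the feasible point (and thus of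
   the optimum) is equivalent to N(S,2) meeting K' - K' only in 0. *)

Lemma col_sum_delta (R : pzSemiRingType) (k : nat) (x : 'cV[R]_k) :
  x = \sum_(a < k) x a 0 *: delta_mx a 0.
Proof.
by rewrite {1}(matrix_sum_delta x); apply: eq_bigr => a _; rewrite big_ord1.
Qed.

Lemma mxrank_outer (F : fieldType) (m n : nat) (x : 'cV[F]_m) (y : 'cV[F]_n) :
  (\rank (x *m y^T) <= 1)%N.
Proof. exact: leq_trans (mxrankM_maxl _ _) (rank_leq_col _). Qed.

Section Lift.
Variables (R : realType) (m n q : nat) (S : 'cV[R]_m -> 'cV[R]_n -> 'cV[R]_q).

Lemma liftSB (A B : 'M[R]_(m, n)) : liftS S (A - B) = liftS S A - liftS S B.
Proof. by apply/matrixP => j k; rewrite !mxE mulmxBr raddfB. Qed.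

Hypothesis S_bilinear : bilinear_map S.

Lemma bilinear0l (y : 'cV[R]_n) : S 0 y = 0.
Proof.
have S0_twice := S_bilinear.1 y 1 0 0; rewrite !scale1r addr0 in S0_twice.
by apply: (addrI (S 0 y)); rewrite addr0 -S0_twice.
Qed.

Lemma bilinear0r (x : 'cV[R]_m) : S x 0 = 0.
Proof.
have S0_twice := S_bilinear.2 x 1 0 0; rewrite !scale1r addr0 in S0_twice.
by apply: (addrI (S x 0)); rewrite addr0 -S0_twice.
Qed.

Lemma bilinear_suml (I : Type) (r : seq I) (c : I -> R) (v : I -> 'cV[R]_m) y :
  S (\sum_(i <- r) c i *: v i) y = \sum_(i <- r) c i *: S (v i) y.
Proof.
apply: (big_rec2 (fun a b => S a y = b)); first exact: bilinear0l.
by move=> i a b _ <-; rewrite S_bilinear.1.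
Qed.

Lemma bilinear_sumr (I : Type) (r : seq I) (c : I -> R) (v : I -> 'cV[R]_n) x :
  S x (\sum_(i <- r) c i *: v i) = \sum_(i <- r) c i *: S x (v i).
Proof.
apply: (big_rec2 (fun a b => S x a = b)); first exact: bilinear0r.
by move=> i a b _ <-; rewrite S_bilinear.2.
Qed.

Lemma liftS_outer (x : 'cV[R]_m) (y : 'cV[R]_n) : liftS S (x *m y^T) = S x y.
Proof.
rewrite [in RHS](col_sum_delta x) bilinear_suml.
under eq_bigr => a _ do rewrite [in S _ y](col_sum_delta y) bilinear_sumr.
apply/matrixP => j k; rewrite ord1 /liftS !mxE /mxtrace summxE.
under [RHS]eq_bigr => a _ do rewrite mxE summxE big_distrr.
rewrite exchange_big /=; apply: eq_bigr => b _; rewrite [LHS]mxE.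
apply: eq_bigr => a _.
rewrite [(x *m _) _ _]mxE [_^T _ _]mxE big_ord1 [y^T _ _]mxE.
by rewrite [(_ *: S _ _) j 0]mxE /Smat [(\matrix_(_,_) _) _ _]mxE mulrC -mulrA.
Qed.

End Lift.

Section RankMinimization.
Variables (R : realType) (m n q : nat) (S : 'cV[R]_m -> 'cV[R]_n -> 'cV[R]_q).
Variable K : 'cV[R]_m * 'cV[R]_n -> Prop.

Lemma Kdiff_outer (x1 x2 : 'cV[R]_m) (y1 y2 : 'cV[R]_n) :
  K (x1, y1) -> K (x2, y2) -> Kdiff K (x1 *m y1^T - x2 *m y2^T).
Proof.
move=> K1 K2; exists (x1 *m y1^T), (x2 *m y2^T).
by split; [exists x1, y1 | split=> //; exists x2, y2].
Qed.

Lemma feasible_outer (x : 'cV[R]_m) (y : 'cV[R]_n) :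
  bilinear_map S -> K (x, y) -> feasible S K (S x y) (x *m y^T).
Proof. by move=> S_bilinear Kxy; split; [exact: liftS_outer | exists x, y]. Qed.

Lemma unique_optimal_eq_of_feasible (z : 'cV[R]_q) (W0 : 'M[R]_(m, n)) :
  feasible S K z W0 -> (forall W, feasible S K z W -> W = W0) ->
  unique_optimal_eq S K z W0.
Proof.
move=> feasW0 uniqW0; split; first by split=> // W /uniqW0 ->.
by move=> W [/uniqW0].
Qed.

Lemma nullset2_feasible_sub (z : 'cV[R]_q) (W1 W2 : 'M[R]_(m, n)) :
  feasible S K z W1 -> feasible S K z W2 -> nullset S 2 (W1 - W2).
Proof.
move=> [lift1 [x1 [y1 [_ E1]]]] [lift2 [x2 [y2 [_ E2]]]]; split.
  apply: leq_trans (mxrank_add _ _) _; rewrite mxrank_opp E1 E2.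
  exact: leq_add (mxrank_outer _ _) (mxrank_outer _ _).
by rewrite liftSB lift1 lift2 subrr.
Qed.

End RankMinimization.

Theorem proposition1 (R : realType) (m n q : nat)
    (S : 'cV[R]_m -> 'cV[R]_n -> 'cV[R]_q)
    (K : 'cV[R]_m * 'cV[R]_n -> Prop) :
  bilinear_map S ->
  ((forall (x : 'cV[R]_m) (y : 'cV[R]_n), K (x, y) ->
      unique_optimal_eq S K (S x y) (x *m y^T))
   <->
   (forall X : 'M[R]_(m, n), nullset S 2 X -> Kdiff K X -> X = 0)).
Proof.
move=> S_bilinear; split.
- move=> uniq_opt X [_ liftX0] [X1 [X2 [[x1 [y1 [K1 E1]]] [[x2 [y2 [K2 E2]]] EX]]]].
  subst X X1 X2.
  have same_obs : S x2 y2 = S x1 y1.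
    by apply/esym/eqP; rewrite -subr_eq0 -!(liftS_outer S_bilinear) -liftSB liftX0.
  have [[opt2 _] [_ uniq1]] := (uniq_opt x2 y2 K2, uniq_opt x1 y1 K1).
  by rewrite (uniq1 (x2 *m y2^T)) ?subrr // -same_obs.
- move=> null_Kdiff x y Kxy.
  apply: unique_optimal_eq_of_feasible; first exact: feasible_outer.
  move=> W feasW; apply/eqP; rewrite -subr_eq0; apply/eqP/null_Kdiff.
    exact: nullset2_feasible_sub feasW (feasible_outer S_bilinear Kxy).
  by case: feasW => _ [x' [y' [K' ->]]]; apply: Kdiff_outer.
Qed.
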